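(* Let $\Lambda$ be a $\mathbb Z$-lattice of rank $\mu\ge1$ with a unimodular bilinear form $L$, let $M_h$ be the automorphism with $L(M_h(a),b)=-L(b,a)$ for all $a,b\in\Lambda$, and assume $M_h$ is of finite order. (a) For each eigenvalue $\lambda\ne1$ of $M_h$, the sesquilinear form $h_\lambda:\Lambda_\lambda\times\Lambda_\lambda\to\mathbb C$, $h_\lambda(a,b):=\sqrt{-\lambda}\cdot L(a,\bar b)$, is hermitian, i.e. $h_\lambda(b,a)=\overline{h_\lambda(a,b)}$; in particular $\sqrt{-\lambda}L(a,\bar a)\in\mathbb R$. Together these define a hermitian form $h:=\bigoplus_{\lambda\ne1}h_\lambda$. (b) For an $M_h$-invariant subspace $V\subset\Lambda_{\mathbb C}$ on which $1$ is not an eigenvalue of $M_h$, the following are equivalent: ($\alpha$) $h|_V$ is positive definite; ($\beta$) the hermitian form $(a,b)\mapsto L(a,\bar b)+L(\bar b,a)$ on $V$ is positive definite.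
   Context: $\Lambda_{\mathbb C}:=\Lambda\otimes\mathbb C$, $L$ extended bilinearly, complex conjugation with respect to $\Lambda$; $\Lambda_\lambda:=\ker(M_h-\lambda\,\mathrm{id})\subset\Lambda_{\mathbb C}$. The square root on $S^1-\{-1\}$ is $\sqrt{e^{2\pi i\alpha}}:=e^{\pi i\alpha}$ for $\alpha\in(-\tfrac12,\tfrac12)$. *)

From HB Require Import structures.
From mathcomp Require Import all_boot all_order all_algebra.
From mathcomp Require Import complex.
From mathcomp Require Import reals.
Set Implicit Arguments. Unset Strict Implicit. Unset Printing Implicit Defensive.
Import Order.TTheory GRing.Theory Num.Theory.
Local Open Scope ring_scope.

Definition bil (T : comNzRingType) (n : nat) (A : 'M[T]_n) (a b : 'cV[T]_n) : T :=
  ((a^T *m A) *m b) 0 0.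

Definition toC (R : realType) (m n : nat) (A : 'M[int]_(m, n)) : 'M[R[i]]_(m, n) :=
  map_mx (fun z : int => z%:~R) A.

(* complex conjugation on Lambda_C w.r.t. Lambda: entrywise conjugation *)
Definition cconj (R : realType) (n : nat) (v : 'cV[R[i]]_n) : 'cV[R[i]]_n :=
  map_mx (fun z => z^*) v.

Definition LC (R : realType) (n : nat) (A : 'M[int]_n) (a b : 'cV[R[i]]_n) : R[i] :=
  bil (toC R A) a b.

Definition in_eigsp (R : realType) (n : nat) (M : 'M[int]_n) (l : R[i]) (v : 'cV[R[i]]_n) : Prop :=
  toC R M *m v = l *: v.

Definition is_eigenvalue (R : realType) (n : nat) (M : 'M[int]_n) (l : R[i]) : Prop :=
  exists v : 'cV[R[i]]_n, v != 0 /\ in_eigsp M l v.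

(* The square root on S^1 - {-1}: sqrt(e^{2 pi i a}) = e^{pi i a}, a in (-1/2,1/2),
   i.e. the square root with positive real part. *)
Definition sqrtS1 (R : realType) (z : R[i]) : R[i] :=
  let w := sqrtC z in if 0 < 'Re w then w else - w.

Definition hl (R : realType) (n : nat) (A : 'M[int]_n) (l : R[i]) (a b : 'cV[R[i]]_n) : R[i] :=
  sqrtS1 (- l) * LC A a (cconj b).

Definition eig_decomp (R : realType) (n : nat) (M : 'M[int]_n) (v : 'cV[R[i]]_n)
  (s : seq R[i]) (w : R[i] -> 'cV[R[i]]_n) : Prop :=
  uniq s /\ (forall l, l \in s -> in_eigsp M l (w l)) /\ v = \sum_(l <- s) w l.

(* h := (+)_{lambda <> 1} h_lambda, evaluated on the diagonal via the
   eigen-decomposition of v. *)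
Definition h_diag (R : realType) (n : nat) (A : 'M[int]_n) (s : seq R[i])
  (w : R[i] -> 'cV[R[i]]_n) : R[i] :=
  \sum_(l <- s | l != 1) hl A l (w l) (w l).

Definition h_posdef (R : realType) (n : nat) (A M : 'M[int]_n)
  (V : {vspace 'cV[R[i]]_n}) : Prop :=
  forall v, v \in V -> v != 0 ->
    forall s w, eig_decomp M v s w -> 0 < h_diag A s w.

Definition g_posdef (R : realType) (n : nat) (A : 'M[int]_n)
  (V : {vspace 'cV[R[i]]_n}) : Prop :=
  forall v, v \in V -> v != 0 -> 0 < LC A v (cconj v) + LC A (cconj v) v.

From HB Require Import structures.
From mathcomp Require Import all_boot all_order all_algebra all_field.
From mathcomp Require Import complex.
From mathcomp Require Import reals.
Import Order.TTheory GRing.Theory Num.Theory.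
Set Implicit Arguments. Unset Strict Implicit. Unset Printing Implicit Defensive.
Local Open Scope ring_scope.

(* Since M_h has finite order, Lambda_C is the direct sum of the eigenspaces
   Lambda_l, all with |l| = 1, and an M_h-stable subspace V is the sum of its
   intersections with them.  Writing L(M_h a, b) = -L(b, a) with a in Lambda_l
   gives L(c, a) = -l L(a, c); for s := sqrt(-l), which satisfies s^2 = -l and
   s conj(s) = 1, this is the hermitian symmetry of h_l.  Applied twice it also
   makes (a, b) |-> L(a, conj b) vanish between distinct eigenspaces, so both
   quadratic forms of (b) split along the eigen-decomposition, and on Lambda_l
     L(a, conj a) + L(conj a, a) = (1 - l) L(a, conj a) = (s + conj s) h_l(a, a)
   with s + conj s = 2 Re s > 0 as soon as l <> 1.  So each form is positive on
   V iff it is positive on every nonzero eigenvector in V, where they agree up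
   to a positive factor. *)

Lemma psumr_gt0 (C : numDomainType) (I : eqType) (r : seq I) (P : pred I)
    (F : I -> C) :
  (forall i, i \in r -> P i -> 0 <= F i) -> has (fun i => P i && (0 < F i)) r ->
  0 < \sum_(i <- r | P i) F i.
Proof.
move=> F_ge0 /hasP [i ir /andP [Pi Fi_gt0]].
rewrite big_seq_cond lt_def psumr_neq0 => [|j /andP []]; last exact: F_ge0.
rewrite sumr_ge0 ?andbT => [|j /andP []]; last exact: F_ge0.
by apply/hasP; exists i; rewrite ?ir ?Pi.
Qed.

Lemma trmxX (T : comNzRingType) n (B : 'M[T]_n) k : (B ^+ k)^T = B^T ^+ k.
Proof.
elim: k => [|k IH]; first by rewrite !expr0 trmx1.
by rewrite exprS exprSr -!mulmxE trmx_mul IH.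
Qed.

Lemma diagonalizable_expr_eq1 (C : numClosedFieldType) n (B : 'M[C]_n.+1) k :
  (0 < k)%N -> B ^+ k = 1 -> diagonalizable B.
Proof.
move=> k_gt0 Bk; apply/diagonalizableP.
have [r Dp] := closed_field_poly_normal ('X^k - 1%:P : {poly C}).
rewrite lead_coefXnsubC // scale1r in Dp.
exists r.
  rewrite -separable_prod_XsubC -Dp polyC1 separable_Xn_sub_1 //.
  by rewrite pnatr_eq0 -lt0n.
rewrite -Dp; apply: mxminpoly_min.
by rewrite rmorphB /= rmorphXn /= horner_mx_X horner_mx_C Bk subrr.
Qed.

(* [eigenspace] in mxalgebra is a space of row vectors, hence the transpose. *)
Lemma eigenvector_decomposition (F : fieldType) n (B : 'M[F]_n) (v : 'cV[F]_n) :
  diagonalizable B^T ->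
  exists s (w : F -> 'cV[F]_n),
    uniq s /\ (forall l, l \in s -> B *m w l = l *: w l) /\ v = \sum_(l <- s) w l.
Proof.
move=> /diagonalizablePeigen [s uniq_s /eqmxP/andP [_ eig_full]].
have /sub_sumsmxP [u_ Dv] : (v^T <= \sum_(i < size s) eigenspace B^T s`_i)%MS.
  by rewrite (big_nth 0) big_mkord in eig_full; apply: submx_trans (submx1 _) _.
pose w l := oapp (fun i => (u_ i *m eigenspace B^T l)^T) 0
              (insub (index l s) : option 'I_(size s)).
have w_nth (i : 'I_(size s)) : w s`_i = (u_ i *m eigenspace B^T s`_i)^T.
  by rewrite /w index_uniq // valK.
exists s, w; split=> //; split.
  move=> l; rewrite -index_mem => ls.
  have -> : l = s`_(Ordinal ls) by rewrite nth_index // -index_mem.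
  have /eigenspaceP : (u_ (Ordinal ls) *m eigenspace B^T s`_(Ordinal ls)
                        <= eigenspace B^T s`_(Ordinal ls))%MS by apply: submxMl.
  by rewrite w_nth -[B]trmxK -trmx_mul trmxK => ->; rewrite linearZ.
rewrite -[v]trmxK Dv linear_sum (big_nth 0) big_mkord.
by apply: eq_bigr => i _; rewrite w_nth.
Qed.

Lemma eigenvectors_in_stable_vspace (F : fieldType) n (B : 'M[F]_n)
    (V : {vspace 'cV[F]_n}) (s : seq F) (w : F -> 'cV[F]_n) :
  (forall v, v \in V -> B *m v \in V) -> uniq s ->
  (forall l, l \in s -> B *m w l = l *: w l) ->
  \sum_(l <- s) w l \in V -> forall l, l \in s -> w l \in V.
Proof.
(* B - a kills w a and rescales every other component w l by l - a != 0. *)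
move=> BV; elim: s w => [//|a s IH] w /= /andP [a_notin_s uniq_s] w_eig.
rewrite big_cons => sumV.
have w_rest : {in s, forall l, w l \in V}.
  have shift_eig l : l \in s -> B *m ((l - a) *: w l) = l *: ((l - a) *: w l).
    by move=> ls; rewrite -scalemxAr w_eig ?inE ?ls ?orbT // !scalerA mulrC.
  have : \sum_(l <- s) (l - a) *: w l \in V.
    suff -> : \sum_(l <- s) (l - a) *: w l
            = B *m (w a + \sum_(l <- s) w l) - a *: (w a + \sum_(l <- s) w l).
      by rewrite memvB ?memvZ ?BV.
    rewrite mulmxDr w_eig ?mem_head // scalerDr opprD addrACA subrr add0r.
    rewrite mulmx_sumr scaler_sumr -sumrB; apply: eq_big_seq => l ls.
    by rewrite w_eig ?inE ?ls ?orbT // scalerBl.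
  move=> /(IH _ uniq_s shift_eig) Vs l ls.
  have la : l - a != 0 by rewrite subr_eq0; apply: contraNneq a_notin_s => <-.
  by rewrite -(scalerK la (w l)) memvZ ?Vs.
move=> l; rewrite inE => /predU1P [->|]; last exact: w_rest.
rewrite -[w a](addrK (\sum_(l <- s) w l)) memvB // big_seq.
by apply: memv_suml => m /w_rest.
Qed.

Section SqrtS1.
Variable R : realType.
Implicit Types z l : R[i].

Lemma sqrtS1_sqr z : sqrtS1 z ^+ 2 = z.
Proof. by rewrite /sqrtS1; case: ifP; rewrite ?sqrrN sqrtCK. Qed.

Lemma sqrtS1_mul_conj z : sqrtS1 z * (sqrtS1 z)^* = `|z|.
Proof. by rewrite -normCK -normrX sqrtS1_sqr. Qed.

Lemma Re_sqrtS1 z : 'Re (sqrtS1 z) = `|'Re (sqrtC z)|.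
Proof.
rewrite /sqrtS1; case: ifP => [/ltW/ger0_norm //|/negbT].
by rewrite raddfN /= -real_leNgt ?real0 ?Creal_Re // => /ler0_norm.
Qed.

Lemma Re_sqrtS1_gt0 z : ~~ (z <= 0) -> 0 < 'Re (sqrtS1 z).
Proof.
rewrite Re_sqrtS1 normr_gt0; apply: contraNN => /eqP Re0.
have -> : z = - 'Im (sqrtC z) ^+ 2.
  by rewrite -{1}(sqrtCK z) {1}[sqrtC z]Crect Re0 add0r exprMn sqrCi mulN1r.
by rewrite oppr_le0 -realEsqr Creal_Im.
Qed.

Lemma sqrtS1N_factor l : `|l| = 1 ->
  1 - l = (sqrtS1 (- l) + (sqrtS1 (- l))^*) * sqrtS1 (- l).
Proof.
move=> l_unit; rewrite mulrDl -expr2 sqrtS1_sqr mulrC sqrtS1_mul_conj.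
by rewrite normrN l_unit addrC.
Qed.

Lemma sqrtS1N_add_conj_gt0 l : `|l| = 1 -> l != 1 ->
  0 < sqrtS1 (- l) + (sqrtS1 (- l))^*.
Proof.
move=> l_unit l_neq1; have : ~~ (- l <= 0).
  by rewrite oppr_le0; apply: contraNN l_neq1 => /ger0_norm <-; rewrite l_unit.
by move=> /Re_sqrtS1_gt0; rewrite ReE pmulr_lgt0 // invr_gt0 ltr0n.
Qed.

Lemma sqrtS1N_conj l : `|l| = 1 -> - (l * (sqrtS1 (- l))^*) = sqrtS1 (- l).
Proof.
move=> l_unit; rewrite -mulNr -{1}(sqrtS1_sqr (- l)) expr2 -mulrA.
rewrite sqrtS1_mul_conj.
by rewrite normrN l_unit mulr1.
Qed.

End SqrtS1.

Section Complexification.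
Variables (R : realType) (n : nat).
Implicit Types x y : 'cV[R[i]]_n.

Lemma cconjK : involutive (@cconj R n).
Proof. by move=> x; apply/matrixP => i j; rewrite !mxE conjCK. Qed.

Lemma cconj0 : cconj 0 = 0 :> 'cV[R[i]]_n.
Proof. exact: map_mx0. Qed.

Lemma cconjZ c x : cconj (c *: x) = c^* *: cconj x.
Proof. exact: map_mxZ. Qed.

Lemma cconj_sum (I : Type) (r : seq I) (F : I -> 'cV[R[i]]_n) :
  cconj (\sum_(i <- r) F i) = \sum_(i <- r) cconj (F i).
Proof. exact: map_mx_sum. Qed.

Lemma map_conj_toC m p (B : 'M[int]_(m, p)) :
  map_mx Num.conj (toC R B) = toC R B.
Proof. by apply/matrixP => i j; rewrite !mxE rmorph_int. Qed.

Lemma cconj_toCM (B : 'M[int]_n) x : cconj (toC R B *m x) = toC R B *m cconj x.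
Proof. by rewrite /cconj map_mxM map_conj_toC. Qed.

Lemma toCX (B : 'M[int]_n) k : toC R (B ^+ k) = toC R B ^+ k.
Proof.
elim: k => [|k IH]; first by rewrite !expr0 /toC map_mx1.
by rewrite !exprS -IH /toC -!mulmxE map_mxM.
Qed.

End Complexification.

Section ComplexifiedForm.
Variables (R : realType) (n : nat) (A : 'M[int]_n).
Implicit Types x y : 'cV[R[i]]_n.

Lemma LC_conj x y : LC A (cconj x) (cconj y) = (LC A x y)^*.
Proof.
rewrite /LC /bil /cconj -(map_conj_toC R A) map_trmx -!map_mxM.
by rewrite map_conj_toC mxE.
Qed.

Lemma LCZl c x y : LC A (c *: x) y = c * LC A x y.
Proof. by rewrite /LC /bil linearZ /= -!scalemxAl mxE. Qed.

Lemma LCZr c x y : LC A x (c *: y) = c * LC A x y.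
Proof. by rewrite /LC /bil -scalemxAr mxE. Qed.

Lemma LC0l y : LC A 0 y = 0.
Proof. by rewrite -(scale0r 0) LCZl mul0r. Qed.

Lemma LC0r x : LC A x 0 = 0.
Proof. by rewrite -(scale0r 0) LCZr mul0r. Qed.

Lemma LC_suml (I : Type) (r : seq I) (F : I -> 'cV[R[i]]_n) y :
  LC A (\sum_(i <- r) F i) y = \sum_(i <- r) LC A (F i) y.
Proof. by rewrite /LC /bil linear_sum !mulmx_suml summxE. Qed.

Lemma LC_sumr (I : Type) (r : seq I) x (F : I -> 'cV[R[i]]_n) :
  LC A x (\sum_(i <- r) F i) = \sum_(i <- r) LC A x (F i).
Proof. by rewrite /LC /bil mulmx_sumr summxE. Qed.

Definition Lsym (v : 'cV[R[i]]_n) : R[i] :=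
  LC A v (cconj v) + LC A (cconj v) v.

Lemma Lsym0 : Lsym 0 = 0.
Proof. by rewrite /Lsym cconj0 LC0l addr0. Qed.

Lemma LsymE v : Lsym v = LC A v (cconj v) + (LC A v (cconj v))^*.
Proof. by rewrite -LC_conj cconjK. Qed.

End ComplexifiedForm.

Section SkewForm.
Variables (R : realType) (n : nat) (A M : 'M[int]_n).
Hypothesis LM_skew : forall a b : 'cV[int]_n, bil A (M *m a) b = - bil A b a.
Implicit Types (l : R[i]) (a b v w x y : 'cV[R[i]]_n).

Lemma gram_skew : M^T *m A = - A^T.
Proof.
have entry (X : 'M[int]_n) i j :
    (((delta_mx i (0 : 'I_1))^T *m X) *m delta_mx j (0 : 'I_1)) 0 0 = X i j.
  by rewrite trmx_delta -rowE -colE !mxE.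
apply/matrixP => i j; have := LM_skew (delta_mx i 0) (delta_mx j 0).
by rewrite /bil trmx_mul -(mulmxA _ M^T) !entry !mxE => ->.
Qed.

Lemma LC_skew x y : LC A (toC R M *m x) y = - LC A y x.
Proof.
have gram_skewC : (toC R M)^T *m toC R A = - (toC R A)^T.
  by rewrite /toC map_trmx -map_mxM gram_skew map_mxN map_trmx.
rewrite /LC /bil trmx_mul -(mulmxA _ (toC R M)^T) gram_skewC.
rewrite -[in RHS](trmxK ((y^T *m toC R A) *m x)) [in RHS]mxE !trmx_mul trmxK.
by rewrite mulmxN mulNmx mulmxA mxE.
Qed.

Lemma LC_eig_swap l x y : in_eigsp M l y -> LC A x y = - (l * LC A y x).
Proof. by move=> y_eig; rewrite -LCZl -y_eig LC_skew opprK. Qed.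

Lemma eig_cconj l x : in_eigsp M l x -> in_eigsp M l^* (cconj x).
Proof. by rewrite /in_eigsp -cconj_toCM => ->; rewrite cconjZ. Qed.

Lemma hl_hermitian l a b :
  `|l| = 1 -> in_eigsp M l b -> hl A l b a = (hl A l a b)^*.
Proof.
move=> l_unit b_eig; rewrite /hl rmorphM /= -LC_conj cconjK (LC_eig_swap _ b_eig).
by rewrite mulrN mulrA [_^* * l]mulrC -mulNr sqrtS1N_conj.
Qed.

Lemma Lsym_eig l w : `|l| = 1 -> in_eigsp M l w ->
  Lsym A w = (sqrtS1 (- l) + (sqrtS1 (- l))^*) * hl A l w w.
Proof.
move=> l_unit w_eig; rewrite /Lsym (LC_eig_swap _ w_eig) -[X in X - _]mul1r.
by rewrite -mulrBl sqrtS1N_factor // -mulrA.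
Qed.

Hypothesis M_finite_order : exists k, (0 < k)%N /\ M ^+ k = 1.

Lemma eigenvalue_norm1 l x : in_eigsp M l x -> x != 0 -> `|l| = 1.
Proof.
move=> x_eig x_neq0; have [k [k_gt0 Mk]] := M_finite_order.
have Mk_x : toC R M ^+ k *m x = l ^+ k *: x.
  elim: (k) => [|j IH]; first by rewrite !expr0 mul1mx scale1r.
  by rewrite exprSr -mulmxA x_eig -scalemxAr IH scalerA -exprS.
move: Mk_x; rewrite -toCX Mk /toC map_mx1 mul1mx => /eqP.
rewrite -subr_eq0 -{1}(scale1r x) -scalerBl scaler_eq0 (negbTE x_neq0) orbF.
rewrite subr_eq0 eq_sym => /eqP lk.
by apply/eqP; rewrite -(pexpr_eq1 k_gt0) ?normr_ge0 // -normrX lk normr1.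
Qed.

Lemma LC_eig_orthogonal l1 l2 x1 x2 :
  in_eigsp M l1 x1 -> in_eigsp M l2 x2 -> l1 != l2 -> LC A x1 (cconj x2) = 0.
Proof.
move=> x1_eig x2_eig l12; have [->|x2_neq0] := eqVneq x2 0.
  by rewrite cconj0 LC0r.
(* Swapping twice multiplies by l2^* l1, which is 1 only if l1 = l2. *)
have := LC_eig_swap x1 (eig_cconj x2_eig).
rewrite (LC_eig_swap _ x1_eig) mulrN opprK mulrA => /eqP.
rewrite -subr_eq0 -{1}(mul1r (LC A x1 _)) -mulrBl mulf_eq0 => /orP [|/eqP //].
rewrite subr_eq0 => /eqP l2l1; move: l12; rewrite eq_sym.
suff -> : l2 = l1 by rewrite eqxx.
rewrite -[l2]mulr1 l2l1 mulrA -normCK (eigenvalue_norm1 x2_eig x2_neq0).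
by rewrite expr1n mul1r.
Qed.

Lemma Lsym_eig_decomp v s (w : R[i] -> 'cV[R[i]]_n) :
  eig_decomp M v s w -> Lsym A v = \sum_(l <- s) Lsym A (w l).
Proof.
move=> [uniq_s [w_eig ->]]; rewrite LsymE cconj_sum LC_suml rmorph_sum -big_split.
apply: eq_big_seq => l ls.
rewrite LsymE LC_sumr (bigD1_seq l) //= big1_seq ?addr0 // => m /andP [ml ms].
by apply: LC_eig_orthogonal (w_eig l ls) (w_eig m ms) _; rewrite eq_sym.
Qed.

End SkewForm.

Lemma eig_decomp_exists (R : realType) n (M : 'M[int]_n.+1) (v : 'cV[R[i]]_n.+1) :
  (exists k, (0 < k)%N /\ M ^+ k = 1) -> exists s w, eig_decomp M v s w.
Proof.
move=> [k [k_gt0 Mk]]; apply: eigenvector_decomposition.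
apply: (diagonalizable_expr_eq1 k_gt0).
by rewrite -trmxX -toCX Mk /toC map_mx1 trmx1.
Qed.

Lemma eig_decomp1 (R : realType) n (M : 'M[int]_n) l (w : 'cV[R[i]]_n) :
  in_eigsp M l w -> eig_decomp M w [:: l] (fun _ => w).
Proof. by move=> w_eig; do !split; rewrite ?big_seq1 // => m /[!inE] /eqP ->. Qed.

Lemma eig_decomp_neq0 (R : realType) n (M : 'M[int]_n) (v : 'cV[R[i]]_n) s w :
  eig_decomp M v s w -> v != 0 -> has (fun l => w l != 0) s.
Proof.
move=> [_ [_ ->]]; apply: contraNT => /hasPn w0.
by rewrite big1_seq // => l /andP [_ /w0 /negPn /eqP].
Qed.

Section PositiveDefinite.
Variables (R : realType) (n : nat) (A M : 'M[int]_n.+1).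
Hypothesis LM_skew : forall a b : 'cV[int]_n.+1, bil A (M *m a) b = - bil A b a.
Hypothesis M_finite_order : exists k, (0 < k)%N /\ M ^+ k = 1.
Variable V : {vspace 'cV[R[i]]_n.+1}.
Hypothesis V_stable : forall v, v \in V -> toC R M *m v \in V.
Hypothesis V_no_fixed : forall v, v \in V -> toC R M *m v = v -> v = 0.
Implicit Types (l : R[i]) (v w : 'cV[R[i]]_n.+1).

Lemma eig_decomp_in_vspace v s (w : R[i] -> 'cV[R[i]]_n.+1) :
  v \in V -> eig_decomp M v s w -> forall l, l \in s -> w l \in V.
Proof.
move=> vV [uniq_s [w_eig Dv]].
by apply: (eigenvectors_in_stable_vspace V_stable) => //; rewrite -Dv.
Qed.

Lemma eigenvalue_neq1 l w : in_eigsp M l w -> w \in V -> w != 0 -> l != 1.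
Proof.
move=> w_eig wV; apply: contraNneq => l1.
by apply/eqP/V_no_fixed; rewrite // w_eig l1 scale1r.
Qed.

Lemma Lsym_gt0_eig l w : in_eigsp M l w -> w \in V -> w != 0 ->
  (0 < Lsym A w) = (0 < hl A l w w).
Proof.
move=> w_eig wV w_neq0.
have l_unit := eigenvalue_norm1 M_finite_order w_eig w_neq0.
rewrite (Lsym_eig LM_skew l_unit w_eig) pmulr_rgt0 // sqrtS1N_add_conj_gt0 //.
exact: eigenvalue_neq1 w_eig wV w_neq0.
Qed.

Lemma h_posdef_Lsym : h_posdef A M V -> g_posdef A V.
Proof.
move=> h_pos v vV v_neq0; have [s [w vsw]] := eig_decomp_exists v M_finite_order.
have [_ [w_eig _]] := vsw; have wV := eig_decomp_in_vspace vV vsw.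
have Lsym_gt0 l : l \in s -> w l != 0 -> 0 < Lsym A (w l).
  move=> ls wl_neq0; rewrite (Lsym_gt0_eig (w_eig l ls) (wV l ls) wl_neq0).
  have l_neq1 := eigenvalue_neq1 (w_eig l ls) (wV l ls) wl_neq0.
  have := h_pos _ (wV l ls) wl_neq0 _ _ (eig_decomp1 (w_eig l ls)).
  by rewrite /h_diag big_cons big_nil l_neq1 addr0.
change (0 < Lsym A v); rewrite (Lsym_eig_decomp LM_skew M_finite_order vsw).
apply: (@psumr_gt0 _ _ _ xpredT) => [l ls _|].
  by have [->|/(Lsym_gt0 l ls)/ltW //] := eqVneq (w l) 0; rewrite Lsym0.
have /hasP [l ls wl_neq0] := eig_decomp_neq0 vsw v_neq0.
by apply/hasP; exists l; rewrite ?Lsym_gt0.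
Qed.

Lemma Lsym_posdef_h : g_posdef A V -> h_posdef A M V.
Proof.
move=> g_pos v vV v_neq0 s w vsw; have [_ [w_eig _]] := vsw.
have wV := eig_decomp_in_vspace vV vsw.
have hl_gt0 l : l \in s -> w l != 0 -> 0 < hl A l (w l) (w l).
  move=> ls wl_neq0; rewrite -(Lsym_gt0_eig (w_eig l ls) (wV l ls) wl_neq0).
  exact: g_pos (wV l ls) wl_neq0.
apply: psumr_gt0 => [l ls _|].
  have [->|/(hl_gt0 l ls)/ltW //] := eqVneq (w l) 0.
  by rewrite /hl cconj0 LC0r mulr0.
have /hasP [l ls wl_neq0] := eig_decomp_neq0 vsw v_neq0.
apply/hasP; exists l; rewrite ?hl_gt0 ?andbT //.
exact: eigenvalue_neq1 (w_eig l ls) (wV l ls) wl_neq0.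
Qed.

End PositiveDefinite.

Unset Implicit Arguments.

Theorem lemma2p2 (R : realType) (n : nat) (A M : 'M[int]_n.+1)
  (hA : A \in unitmx) (hM : M \in unitmx)
  (hML : forall a b : 'cV[int]_n.+1, bil A (M *m a) b = - bil A b a)
  (hfin : exists k : nat, (0 < k)%N /\ M ^+ k = 1) :
  (forall l : R[i], is_eigenvalue M l -> l != 1 ->
     forall a b : 'cV[R[i]]_n.+1, in_eigsp M l a -> in_eigsp M l b ->
       hl A l b a = (hl A l a b)^* /\ hl A l a a \is Num.real)
  /\
  (forall V : {vspace 'cV[R[i]]_n.+1},
     (forall v, v \in V -> toC R M *m v \in V) ->
     (forall v, v \in V -> toC R M *m v = v -> v = 0) ->
     (h_posdef A M V <-> g_posdef A V)).
Proof.
split.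
  move=> l [x [x_neq0 x_eig]] _ a b a_eig b_eig.
  have l_unit := eigenvalue_norm1 hfin x_eig x_neq0.
  have hl_herm := hl_hermitian hML _ l_unit.
  by split; rewrite ?CrealE -hl_herm.
move=> V V_stable V_no_fixed; split.
  exact: (h_posdef_Lsym hML hfin V_stable V_no_fixed).
exact: (Lsym_posdef_h hML hfin V_stable V_no_fixed).
Qed.
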